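(* Let $I$ be a countable set with $|I|\ge2$, let $\mathfrak{M}_i=(S_i,\mathcal{L}_i)$, $i\in I$, be partial linear spaces and $\mathfrak{M}=\bigotimes_{i\in I}\mathfrak{M}_i$. Every degenerate hyperplane of $\mathfrak{M}$ is not flappy.
   Context: A partial linear space is a pair $(S,\mathcal{L})$ of points and lines such that every line has at least two points, every point lies on a line, two distinct lines share at most one point; points are collinear ($a\sim b$) if on a common line, $[a]_\sim$ is the set of points collinear with $a$. A subspace is a set $X$ such that any line meeting it in at least two points lies in it; a hyperplane is a proper subspace meeting every line. A hyperplane $X$ is flappy if for every line $L\subseteq X$ there is $a\notin X$ with $L\subseteq[a]_\sim$. Segre product: point set $S=\prod_{i\in I}S_i$; for $a\in S$, $x\in S_i$, $a[i/x]$ is $a$ with $i$-th coordinate replaced by $x$, and $a[i/A]=\{a[i/x]:x\in A\}$; lines are $a[i/l]$ for $a\in S$, $i\in I$, $l\in\mathcal{L}_i$. For a hyperplane $\mathcal{H}$ of $\mathfrak{M}$, $\mathcal{H}^{[a]}_i=\{x\in S_i: a[i/x]\in\mathcal{H}\}$; $\mathcal{H}$ is non-degenerate if $\mathcal{H}^{[a]}_i$ is a hyperplane of $\mathfrak{M}_i$ for all $a\in S$, $i\in I$, and degenerate otherwise. *)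

From mathcomp Require Import all_boot.
Set Implicit Arguments. Unset Strict Implicit. Unset Printing Implicit Defensive.

(* Sets of points are predicates; a geometry is a point type S with a
   family of lines L : (S -> Prop) -> Prop. The point set is all of S. *)

Section Geometry.
Variable S : Type.
Variable L : (S -> Prop) -> Prop.

Definition is_pls : Prop :=
  [/\ (forall l, L l -> exists a b, a <> b /\ l a /\ l b),
      (forall a, exists l, L l /\ l a) &
      (forall l1 l2, L l1 -> L l2 ->
         (exists a b, a <> b /\ l1 a /\ l1 b /\ l2 a /\ l2 b) ->
         forall x, l1 x <-> l2 x)].

Definition collinear (a b : S) : Prop := exists l, L l /\ l a /\ l b.

Definition subspace (X : S -> Prop) : Prop :=
  forall l, L l -> (exists a b, a <> b /\ l a /\ l b /\ X a /\ X b) ->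
    forall x, l x -> X x.

Definition hyperplane (X : S -> Prop) : Prop :=
  [/\ subspace X, (exists a, ~ X a) & (forall l, L l -> exists a, l a /\ X a)].

Definition flappy (X : S -> Prop) : Prop :=
  forall l, L l -> (forall x, l x -> X x) ->
    exists a, ~ X a /\ forall x, l x -> collinear a x.

End Geometry.

Definition upd {I : eqType} {S : I -> Type} (a : forall j, S j) (i : I) (x : S i)
  : forall j, S j :=
  fun j => match i =P j with
           | ReflectT e => eq_rect i S x j e
           | ReflectF _ => a j
           end.

Arguments upd {I S} a i x j.

Definition segre_lines {I : eqType} {S : I -> Type}
  (L : forall i, (S i -> Prop) -> Prop) : ((forall i, S i) -> Prop) -> Prop :=
  fun m => exists (a : forall i, S i) (i : I) (l : S i -> Prop),
    L i l /\ forall b, m b <-> exists x, l x /\ b = upd a i x.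

Definition slice {I : eqType} {S : I -> Type} (H : (forall i, S i) -> Prop)
  (a : forall i, S i) (i : I) : S i -> Prop :=
  fun x => H (upd a i x).

Arguments slice {I S} H a i x.

Definition nondegenerate {I : eqType} {S : I -> Type}
  (L : forall i, (S i -> Prop) -> Prop) (H : (forall i, S i) -> Prop) : Prop :=
  forall a i, hyperplane (L i) (slice H a i).

Definition degenerate {I : eqType} {S : I -> Type}
  (L : forall i, (S i -> Prop) -> Prop) (H : (forall i, S i) -> Prop) : Prop :=
  ~ nondegenerate L H.

From mathcomp Require Import all_boot.
From Stdlib Require Import Classical FunctionalExtensionality.

(* A flappy hyperplane [H] of the Segre product is in fact non-degenerate.
   Every line [l] of a factor lifts to the line [a[i/l]], so each slice
   [H^[a]_i] inherits the subspace property and meets every line.  If a slice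
   were the whole of [S_i], a lifted line [a[i/l]] would lie in [H], and
   flappiness would give [c] outside [H] collinear with two distinct points
   [a[i/p]], [a[i/q]] of it.  A point collinear with [a[i/p]] either agrees
   with [a] off [i] or has [i]-th coordinate [p]; as [p <> q], [c] agrees with
   [a] off [i], so [c = a[i/c_i]] lies in the lifted line, hence in [H]. *)

Section Update.
Context {I : eqType} {S : I -> Type}.
Implicit Types (a c : forall j, S j) (i j : I).

Lemma upd_same a i (x : S i) : upd a i x i = x.
Proof. by rewrite /upd; case: eqP => // e; rewrite (eq_axiomK e). Qed.

Lemma upd_other a i (x : S i) j : i <> j -> upd a i x j = a j.
Proof. by move=> ne; rewrite /upd; case: eqP. Qed.

Lemma upd_inj {a i} : injective (upd a i).
Proof. by move=> x y /(f_equal (fun f => f i)); rewrite !upd_same. Qed.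

Lemma upd_agree a c i : (forall j, j <> i -> c j = a j) -> c = upd a i (c i).
Proof.
move=> agree; apply: functional_extensionality_dep => j.
case: (eqVneq i j) => [<-|/eqP ne]; first by rewrite upd_same.
by rewrite upd_other // agree // => /esym.
Qed.

End Update.

Section SegreProduct.
Context {I : eqType} {S : I -> Type}.
Variable L : forall i, (S i -> Prop) -> Prop.
Implicit Types (a c : forall j, S j) (i : I) (H : (forall j, S j) -> Prop).

Definition lift_line a i (l : S i -> Prop) : (forall j, S j) -> Prop :=
  fun b => exists x, l x /\ b = upd a i x.

Lemma segre_lines_lift a {i l} : L i l -> segre_lines L (lift_line a i l).
Proof. by move=> Ll; exists a, i, l. Qed.

Lemma subspace_slice H a i :
  subspace (segre_lines L) H -> subspace (L i) (slice H a i).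
Proof.
move=> Hsub l Ll [p [q [npq [lp [lq [Hp Hq]]]]]] x lx.
apply: (Hsub _ (segre_lines_lift a Ll)); last by exists x.
exists (upd a i p), (upd a i q); split.
  by move=> e; apply: npq; exact: upd_inj e.
by split; [exists p | split; [exists q | ]].
Qed.

Lemma slice_meets_lines H a i :
  (forall m, segre_lines L m -> exists b, m b /\ H b) ->
  forall l, L i l -> exists x, l x /\ slice H a i x.
Proof.
move=> Hmeet l Ll; case: (Hmeet _ (segre_lines_lift a Ll)) => _ [[x [lx ->]] Hx].
by exists x.
Qed.

Lemma collinear_upd a c i p :
  collinear (segre_lines L) c (upd a i p) ->
  (forall j, j <> i -> c j = a j) \/ c i = p.
Proof.
case=> m [[a' [k [l' [_ hm]]]]]; rewrite !hm => -[[x [_ ->]] [y [_ e]]].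
case: (eqVneq k i) => [eki|/eqP nki].
  subst k; left=> j /nesym nj; have := f_equal (fun f => f j) e.
  by rewrite !upd_other // => /esym.
right; have := f_equal (fun f => f i) e.
by rewrite upd_same !upd_other // => ->.
Qed.

Lemma collinear_upd2 {a c i p q} : p <> q ->
  collinear (segre_lines L) c (upd a i p) ->
  collinear (segre_lines L) c (upd a i q) -> c = upd a i (c i).
Proof.
move=> npq /collinear_upd[agree _|cp]; first exact: upd_agree.
case/collinear_upd=> [agree|cq]; first exact: upd_agree.
by case: npq; rewrite -cp -cq.
Qed.

Lemma flappy_slice_proper H a i : is_pls (L i) ->
  flappy (segre_lines L) H -> exists x, ~ slice H a i x.
Proof.
case=> two_points on_line _ Hfl; apply: NNPP => full.
have Hslice x : H (upd a i x) by apply: NNPP => Hx; apply: full; exists x.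
have [l [Ll _]] := on_line (a i).
have [p [q [npq [lp lq]]]] := two_points l Ll.
have [|c [Hc coll]] := Hfl _ (segre_lines_lift a Ll).
  by move=> _ [x [_ ->]].
have cE : c = upd a i (c i).
  by apply: (collinear_upd2 npq); apply: coll; [exists p | exists q].
by apply: Hc; rewrite cE; apply: Hslice.
Qed.

Lemma flappy_hyperplane_nondegenerate H : (forall i, is_pls (L i)) ->
  hyperplane (segre_lines L) H -> flappy (segre_lines L) H -> nondegenerate L H.
Proof.
move=> HL [Hsub _ Hmeet] Hfl a i; split.
- exact: subspace_slice.
- exact: flappy_slice_proper.
- exact: slice_meets_lines.
Qed.

End SegreProduct.

Theorem lemma3p7 (I : countType) (S : I -> Type)
  (L : forall i, (S i -> Prop) -> Prop)
  (HL : forall i, is_pls (L i))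
  (HI : exists i j : I, i <> j)
  (H : (forall i, S i) -> Prop) :
  hyperplane (segre_lines L) H -> degenerate L H ->
  ~ flappy (segre_lines L) H.
Proof.
by move=> Hhyp Hdeg Hfl; apply/Hdeg/flappy_hyperplane_nondegenerate.
Qed.
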